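(* Let $H$ and $\Xi^*$ be either ($H_D$, $\Xi^+$), ($H_A$, $\Xi^+$), or ($H_{E_k}$, $\Xi$), with corresponding criterion $\phi\in\{\phi_D,\phi_A,\phi_{E_k}\}$. Let $\Xi'\subseteq\Xi^*$ be a finite nonempty set, and let $(\xi',t')$ be an optimal solution of the linear program: maximize $t$ over $\xi\in\Xi$, $t\in\mathbb{R}$, subject to $\sum_{x\in\mathcal{X}}H(\mu,x)\xi(x)\ge t$ for all $\mu\in\Xi'$. If $\xi'\in\Xi^*$, then $$\phi(\xi')\le \sup_{\xi\in\Xi^*}\phi(\xi)\le t'.$$
   Context: $\mathcal{X}$ finite, $f:\mathcal{X}\to\mathbb{R}^p$, $\Xi$ the probability measures on $\mathcal{X}$, $M(\xi)=\sum_x f(x)f^\top(x)\xi(x)$, $\Xi^+=\{\mu\in\Xi: M(\mu)\text{ nonsingular}\}$. $\phi_D(\xi)=\det^{1/p}M(\xi)$, $\phi_A(\xi)=1/\mathrm{tr}M^{-1}(\xi)$ (on $\Xi^+$), $\phi_{E_k}(\xi)$ = sum of the $k$ smallest eigenvalues of $M(\xi)$. $H_D(\mu,x)=\frac{\det^{1/p}[M(\mu)]}{p}f^\top(x)M^{-1}(\mu)f(x)$, $H_A(\mu,x)=\|M^{-1}(\mu)f(x)\|^2/[\mathrm{tr}M^{-1}(\mu)]^2$, $H_{E_k}(\mu,x)=\|P^{(k)}(\mu)f(x)\|^2$, where $P^{(k)}(\mu)=\sum_{i=1}^k u_iu_i^\top$ for an orthonormal eigenbasis $u_1,\dots,u_p$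 of $M(\mu)$ ordered by increasing eigenvalues. *)

From HB Require Import structures.
From mathcomp Require Import all_boot all_order all_algebra.
From Stdlib Require Import ClassicalEpsilon.
Set Implicit Arguments. Unset Strict Implicit. Unset Printing Implicit Defensive.
Import Order.TTheory GRing.Theory Num.Theory.
Local Open Scope ring_scope.

Section OptDesign.
Variables (R : rcfType) (X : finType) (p : nat) (f : X -> 'cV[R]_p).

Definition design := {ffun X -> R}.
Definition in_Xi (xi : design) : Prop := (forall x, 0 <= xi x) /\ \sum_x xi x = 1.

Definition Minf (xi : design) : 'M[R]_p := \sum_x xi x *: (f x *m (f x)^T).

Definition in_Xiplus (xi : design) : Prop := in_Xi xi /\ Minf xi \in unitmx.

(* the nonnegative n-th root of a (exists for a >= 0, n > 0 in a rcf) *)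
Definition proot (n : nat) (a : R) : R :=
  epsilon (inhabits 0) (fun y => 0 <= y /\ y ^+ n = a).

Definition eigvals (A : 'M[R]_p) : seq R :=
  epsilon (inhabits [::])
    (fun s : seq R => sorted <=%R s /\ char_poly A = \prod_(a <- s) ('X - a%:P)).

Definition phi_D (xi : design) : R := proot p (\det (Minf xi)).
Definition phi_A (xi : design) : R := 1 / \tr (invmx (Minf xi)).
Definition phi_E (k : nat) (xi : design) : R := \sum_(i < k) (eigvals (Minf xi))`_i.

Definition sqnorm (v : 'cV[R]_p) : R := \sum_i v i 0 ^+ 2.

Definition H_D (mu : design) (x : X) : R :=
  proot p (\det (Minf mu)) / p%:R * ((f x)^T *m invmx (Minf mu) *m f x) 0 0.
Definition H_A (mu : design) (x : X) : R :=
  sqnorm (invmx (Minf mu) *m f x) / (\tr (invmx (Minf mu))) ^+ 2.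

Definition ordered_eigenbasis (A V : 'M[R]_p) : Prop :=
  V^T *m V = 1%:M /\
  exists d : 'rV[R]_p,
    (forall i j : 'I_p, (i <= j)%N -> d 0 i <= d 0 j) /\ A *m V = V *m diag_mx d.

Definition Pk (k : nat) (V : 'M[R]_p) : 'M[R]_p :=
  \sum_(i < p | (i < k)%N) (col i V *m (col i V)^T).

(* H_{E_k}, given a choice V mu of ordered orthonormal eigenbasis of M(mu) *)
Definition H_E (k : nat) (V : design -> 'M[R]_p) (mu : design) (x : X) : R :=
  sqnorm (Pk k (V mu) *m f x).

Definition lp_feasible (Xs : seq design) (H : design -> X -> R) (xi : design) (t : R) : Prop :=
  in_Xi xi /\ forall mu, mu \in Xs -> t <= \sum_x H mu x * xi x.
Definition lp_optimal (Xs : seq design) (H : design -> X -> R) (xi : design) (t : R) : Prop :=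
  lp_feasible Xs H xi t /\
  forall (xi2 : design) (t2 : R), lp_feasible Xs H xi2 t2 -> t2 <= t.

End OptDesign.

From HB Require Import structures.
From mathcomp Require Import all_boot all_order all_algebra.
From mathcomp Require Import complex.
From mathcomp Require Import zify ring.
From Stdlib Require Import ClassicalEpsilon.
Set Implicit Arguments. Unset Strict Implicit. Unset Printing Implicit Defensive.
Import Order.TTheory GRing.Theory Num.Theory.
Local Open Scope ring_scope.

(* Each criterion satisfies the supergradient-type inequality
   phi(xi) <= sum_x H(mu, x) xi(x) for all mu in Xi' and xi in Xi^*, so
   (xi, phi(xi)) is feasible for the linear program and phi(xi) <= t'.
   - phi_D: AM-GM on the (nonnegative) eigenvalues of M(xi) M(mu)^-1.
   - phi_A: Cauchy-Schwarz for the semi-inner product tr (Y M(xi) Z^T),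
     applied to M(mu)^-1 and M(xi)^-1.
   - phi_{E_k}: Ky Fan's principle; written in an eigenbasis of M(xi), the
     diagonal entries of U^T M(xi) U are averages of the eigenvalues whose
     weights for the k first entries lie in [0, 1] and sum to k.
   Positivity of eigenvalues and the spectral theorem are obtained in R[i]. *)

Local Notation toC := (real_complex _).
Local Notation MC A := (map_mx (real_complex _) A).

Lemma proot_spec (R : rcfType) (n : nat) (a : R) :
  (0 < n)%N -> 0 <= a -> 0 <= proot n a /\ proot n a ^+ n = a.
Proof.
move=> n0 a0; rewrite /proot; apply epsilon_spec.
have := @poly_ivt R ('X^n - a%:P) 0 (1 + a).
rewrite !hornerE expr0n eqn0Ngt n0 /= sub0r oppr_le0 a0 /=.
case=> [||y /andP[y0 _]]; first by rewrite addr_ge0.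
- rewrite subr_ge0; case: n n0 => // m _; rewrite exprS.
  apply: (le_trans (y := 1 + a)); first by rewrite lerDr.
  by rewrite ler_peMr ?exprn_ege1 ?addr_ge0 // lerDl.
- by rewrite /root !hornerE subr_eq0 => /eqP ry; exists y.
Qed.

Lemma sqnormE (R : rcfType) (p : nat) (v : 'cV[R]_p) : sqnorm v = (v^T *m v) 0 0.
Proof. by rewrite /sqnorm mxE; apply: eq_bigr => i _; rewrite !mxE expr2. Qed.

Lemma sqnorm_ge0 (R : rcfType) (p : nat) (v : 'cV[R]_p) : 0 <= sqnorm v.
Proof. by apply: sumr_ge0 => i _; rewrite sqr_ge0. Qed.

Lemma sumr_indicator_ltn (R : nzRingType) (p k : nat) : (k <= p)%N ->
  \sum_(i < p) ((i < k)%N%:R : R) = k%:R.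
Proof.
move=> kp; rewrite (eq_bigr (fun i : 'I_p => if (i < k)%N then 1 else 0)); last first.
  by move=> i _; case: (i < k)%N.
by rewrite -big_mkcond -(big_ord_widen p (fun=> 1) kp) sumr_const card_ord.
Qed.

Lemma AGM_seq (R : rcfType) (s : seq R) : all (fun a => 0 <= a) s ->
  \prod_(a <- s) a <= ((\sum_(a <- s) a) / (size s)%:R) ^+ size s.
Proof.
move=> s_ge0.
have s_ge0' : {in predT, forall i : 'I_(size s), 0 <= s`_i}.
  by move=> i _; apply: (allP s_ge0); apply: mem_nth.
have [+ _] := leif_AGM s_ge0'; rewrite card_ord.
by rewrite [\prod_(_ <- s) _](big_nth 0) [\sum_(_ <- s) _](big_nth 0) !big_mkord.
Qed.

(* With c the k-th smallest value, [m x := min (x - c) 0] gives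
   sum_(i<k) (s_i - c) = sum_j m (a j) <= sum_j (a j - c) w j. *)
Lemma sum_smallest_le_weighted (R : realFieldType) (p k : nat) (s : seq R)
    (a w : 'I_p -> R) :
  sorted <=%R s -> perm_eq [seq a j | j <- enum 'I_p] s -> (0 < k)%N -> (k <= p)%N ->
  (forall j, 0 <= w j <= 1) -> \sum_j w j = k%:R ->
  \sum_(i < k) s`_i <= \sum_j a j * w j.
Proof.
move=> s_sorted pe k0 kp w01 sw.
have sz : size s = p by rewrite -(perm_size pe) size_map size_enum_ord.
set c := s`_k.-1.
pose m (x : R) := if x <= c then x - c else 0.
have shift : \sum_j a j * w j = \sum_j (a j - c) * w j + c * k%:R.
  rewrite -sw mulr_sumr -big_split /=; apply: eq_bigr => j _.
  by rewrite mulrBl subrK.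
have m_le : \sum_j m (a j) <= \sum_j (a j - c) * w j.
  apply: ler_sum => j _; rewrite /m; have /andP[w0 w1] := w01 j.
  case: ifP => h; last by rewrite mulr_ge0 // subr_ge0 ltW // ltNge h.
  by rewrite -[X in X <= _]mulr1 ler_wnM2l // subr_le0.
have mono : {in [pred n | (n < size s)%N] &,
    {homo nth 0 s : i j / (i <= j)%N >-> i <= j}}.
  exact: (sorted_leq_nth le_trans lexx 0 s_sorted).
have m_sum : \sum_j m (a j) = \sum_(i < k) (s`_i - c).
  have -> : \sum_j m (a j) = \sum_(x <- [seq a j | j <- enum 'I_p]) m x.
    by rewrite big_map big_enum.
  rewrite (perm_big _ pe) /=.
  rewrite (big_nth 0) big_mkord sz [RHS](big_ord_widen p (fun i => s`_i - c) kp).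
  rewrite [RHS]big_mkcond /=; apply: eq_bigr => i _; rewrite /m.
  have lt_ip : (i < p)%N := ltn_ord i.
  case: (ltnP i k) => ik.
    by rewrite (mono i k.-1) ?inE ?sz //=; lia.
  have ci : c <= s`_i by apply: mono; rewrite ?inE ?sz //=; lia.
  by case: ifP => // h; apply/eqP; rewrite subr_eq0 eq_le h.
rewrite shift; apply: (le_trans _ (lerD m_le (lexx (c * k%:R)))).
by rewrite m_sum sumrB sumr_const card_ord mulr_natr subrK.
Qed.

Lemma mxtrace_form_subZ (R : comNzRingType) (p : nat) (P Y Z : 'M[R]_p) (s : R) :
  \tr ((Y - s *: Z) *m P *m (Y - s *: Z)^T) =
  \tr (Y *m P *m Y^T) - s * \tr (Y *m P *m Z^T) - s * \tr (Z *m P *m Y^T)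
  + s ^+ 2 * \tr (Z *m P *m Z^T).
Proof.
have -> : (Y - s *: Z)^T = Y^T - s *: Z^T by apply/matrixP => i j; rewrite !mxE.
rewrite !mulmxBl !mulmxBr -!scalemxAl -!scalemxAr.
by rewrite !raddfB /= !linearZ /=; ring.
Qed.

Lemma conj_toC (R : rcfType) (x : R) : (toC x)^* = toC x.
Proof. by apply: conj_Creal; apply/complex_realP; exists x. Qed.

(* Positive semidefiniteness of a real matrix, tested as a Hermitian form on
   complex row vectors, with the kernel of the form equal to that of K. *)
Definition psdmx (R : rcfType) (p : nat) (K : 'M[R]_p) :=
  forall v : 'rV[R[i]]_p,
    0 <= (v *m MC K *m (map_mx Num.conj v)^T) 0 0 /\
    ((v *m MC K *m (map_mx Num.conj v)^T) 0 0 = 0 -> v *m MC K = 0).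

Lemma psdmx1 (R : rcfType) (p : nat) : psdmx (1%:M : 'M[R]_p).
Proof.
move=> v; rewrite map_mx1 mulmx1.
have -> : (v *m (map_mx Num.conj v)^T) 0 0 = \sum_i v 0 i * (v 0 i)^*.
  by rewrite mxE; apply: eq_bigr => i _; rewrite !mxE.
split; first by apply: sumr_ge0 => i _; exact: mul_conjC_ge0.
move=> /psumr_eq0P v0; apply/rowP => i; rewrite mxE.
by apply/eqP; rewrite -mul_conjC_eq0; apply/eqP/v0 => // j _; exact: mul_conjC_ge0.
Qed.

(* An eigenvector v of G K^-1 gives r = (v G v^* ) / (v K v^* ). *)
Lemma eigenvalue_mul_invmx_ge0 (R : rcfType) (p : nat) (G K : 'M[R]_p) :
  psdmx G -> psdmx K -> K \in unitmx ->
  forall r, eigenvalue (MC (G *m invmx K)) r -> 0 <= r.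
Proof.
move=> psdG psdK uK r /eigenvalueP [v Hv v0].
have uKC : MC K \in unitmx by rewrite map_unitmx.
have vG : v *m MC G = r *: (v *m MC K).
  by rewrite scalemxAl -Hv map_mxM map_invmx !mulmxA mulmxKV.
set w := (map_mx Num.conj v)^T.
have [qG0 _] := psdG v; have [qK0 qK_eq0] := psdK v.
have qK_neq0 : (v *m MC K *m w) 0 0 != 0.
  by apply: contra v0 => /eqP/qK_eq0 vK; rewrite -(mulmxK uKC v) vK mul0mx.
have -> : r = (v *m MC G *m w) 0 0 / (v *m MC K *m w) 0 0.
  by rewrite vG -scalemxAl mxE mulfK.
by rewrite divr_ge0.
Qed.

Lemma char_poly_split_ge0 (R : rcfType) (p : nat) (A : 'M[R]_p) :
  (forall r, eigenvalue (MC A) r -> 0 <= r) ->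
  exists s : seq R, [/\ size s = p, all (fun a => 0 <= a) s &
    char_poly A = \prod_(a <- s) ('X - a%:P)].
Proof.
move=> eig_ge0.
have [rs Ers] := closed_field_poly_normal (char_poly (MC A)).
rewrite (monicP (char_poly_monic _)) scale1r in Ers.
have rs_real z : z \in rs -> 0 <= z /\ toC (complex.Re z) = z.
  move=> zin; have : root (char_poly (MC A)) z by rewrite Ers root_prod_XsubC.
  rewrite -eigenvalue_root_char => /eig_ge0 z0; split=> //.
  by apply: RRe_real; exact: ger0_real.
exists (map (@complex.Re R) rs); split.
- have := size_char_poly (MC A); rewrite Ers size_prod_XsubC size_map.
  by case.
- apply/allP => a /mapP [z zin ->]; have [z0 zE] := rs_real z zin.
  by rewrite -ler0c zE.
- apply: (map_poly_inj (real_complex R)).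
  rewrite map_char_poly Ers map_prod_XsubC big_map.
  by apply: eq_big_seq => z zin; have [_ zE] := rs_real z zin; rewrite -[in LHS]zE.
Qed.

Lemma det_trace_split (F : fieldType) (p : nat) (A : 'M[F]_p) (s : seq F) :
  (0 < p)%N -> size s = p -> char_poly A = \prod_(a <- s) ('X - a%:P) ->
  \det A = \prod_(a <- s) a /\ \tr A = \sum_(a <- s) a.
Proof.
move=> p0 sz E; split.
  have := char_poly_det A; rewrite E coef0_prod_XsubC sz => /mulfI inj.
  by apply/esym/inj; rewrite signr_eq0.
have := @coefPn_prod_XsubC _ s; rewrite sz -lt0n p0 => /(_ isT) coefE.
by have := char_poly_trace A p0; rewrite E coefE => /oppr_inj.
Qed.

(* AM-GM on the nonnegative eigenvalues of G K^-1. *)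
Lemma det_le_AGM_trace (R : rcfType) (p : nat) (G K : 'M[R]_p) :
  (0 < p)%N -> psdmx G -> psdmx K -> K \in unitmx ->
  [/\ 0 <= \det (G *m invmx K), 0 <= \tr (G *m invmx K) &
      \det (G *m invmx K) <= (\tr (G *m invmx K) / p%:R) ^+ p].
Proof.
move=> p0 psdG psdK uK.
have [s [sz s_ge0 E]] :=
  char_poly_split_ge0 (eigenvalue_mul_invmx_ge0 psdG psdK uK).
have [-> ->] := det_trace_split p0 sz E.
split; last by rewrite -sz; apply: AGM_seq.
- by rewrite big_seq; apply: prodr_ge0 => a /(allP s_ge0).
- by rewrite big_seq; apply: sumr_ge0 => a /(allP s_ge0).
Qed.

Lemma tr_invmx_gt0 (R : rcfType) (p : nat) (K : 'M[R]_p) :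
  (0 < p)%N -> psdmx K -> K \in unitmx -> 0 < \tr (invmx K).
Proof.
move=> p0 psdK uK.
have [d0 t0 le] := det_le_AGM_trace p0 (@psdmx1 R p) psdK uK.
rewrite mul1mx in d0 t0 le.
rewrite lt_def t0 andbT; apply: contraTneq le => ->.
rewrite mul0r expr0n eqn0Ngt p0 /= -ltNge lt_def d0 andbT det_inv invr_eq0.
by rewrite -unitfE -unitmxE.
Qed.

Lemma char_poly_similar (F : fieldType) (n : nat) (P A : 'M[F]_n) :
  P \in unitmx -> char_poly (invmx P *m A *m P) = char_poly A.
Proof.
move=> uP; rewrite /char_poly /char_poly_mx.
have -> : 'X%:M - map_mx polyC (invmx P *m A *m P) =
    map_mx polyC (invmx P) *m ('X%:M - map_mx polyC A) *m map_mx polyC P.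
  rewrite mulmxBr mulmxBl mul_mx_scalar -scalemxAl -map_mxM mulVmx // map_mx1.
  by rewrite scalemx1 !map_mxM.
rewrite !det_mulmx !det_map_mx mulrC mulrA -rmorphM /= -det_mulmx.
by rewrite mulmxV // det1 rmorph1 mul1r.
Qed.

Lemma char_poly_diag (R : comNzRingType) (n : nat) (d : 'rV[R]_n) :
  char_poly (diag_mx d) = \prod_(j < n) ('X - (d 0 j)%:P).
Proof.
rewrite char_poly_trig ?diag_mx_is_trig //.
by apply: eq_bigr => j _; rewrite mxE eqxx mulr1n.
Qed.

Lemma sym_spectral (R : rcfType) (p : nat) (M : 'M[R]_p) : M^T = M ->
  exists (Q : 'M[R[i]]_p) (a : 'I_p -> R),
   [/\ Q *m map_mx Num.conj Q^T = 1%:M,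
       MC M = map_mx Num.conj Q^T *m diag_mx (\row_j toC (a j)) *m Q &
       char_poly M = \prod_j ('X - (a j)%:P)].
Proof.
move=> MT; set A := MC M.
have hA : A \is hermsymmx.
  apply/is_hermitianmxP; rewrite expr0 scale1r.
  by apply/matrixP => i j; rewrite !mxE conj_toC -[in LHS]MT mxE.
have /orthomx_spectralP EA := hermitian_normalmx hA.
have dreal := hermitian_spectral_diag_real hA.
set Q := spectralmx A in EA; set d := spectral_diag A in EA dreal.
have Ea j : toC (complex.Re (d 0 j)) = d 0 j.
  by apply: RRe_real; move/mxOverP: dreal; apply.
have dE : d = \row_j toC (complex.Re (d 0 j)) by apply/rowP => j; rewrite mxE Ea.
exists Q, (fun j => complex.Re (d 0 j)); split.
- exact/unitarymxP/spectral_unitarymx.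
- by rewrite -dE -invmx_unitary ?spectral_unitarymx.
- apply: (map_poly_inj (real_complex R)).
  rewrite map_char_poly -/A {1}EA char_poly_similar ?unitarymx_unit ?spectral_unitarymx //.
  rewrite char_poly_diag map_prod_XsubC; apply: eq_bigr => j _.
  by rewrite -[in LHS]Ea.
Qed.

(* The squared moduli of a unitary matrix form a doubly stochastic matrix,
   which maps weights in [0, 1] to weights in [0, 1] with the same sum. *)
Lemma unitary_weights (R : rcfType) (p : nat) (W : 'M[R[i]]_p) (e : 'I_p -> R) :
  W *m map_mx Num.conj W^T = 1%:M -> (forall i, 0 <= e i <= 1) ->
  exists w : 'I_p -> R,
   [/\ forall j, toC (w j) = \sum_i toC (e i) * (W j i * (W j i)^*),
       forall j, 0 <= w j <= 1 &
       \sum_j w j = \sum_i e i].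
Proof.
move=> WW e01; have WcW : map_mx Num.conj W^T *m W = 1%:M by apply: mulmx1C.
have row_norm j : \sum_i W j i * (W j i)^* = 1.
  have := congr1 (fun A : 'M[R[i]]_p => A j j) WW; rewrite !mxE eqxx mulr1n => <-.
  by apply: eq_bigr => i _; rewrite !mxE.
have col_norm i : \sum_j W j i * (W j i)^* = 1.
  have := congr1 (fun A : 'M[R[i]]_p => A i i) WcW; rewrite !mxE eqxx mulr1n => <-.
  by apply: eq_bigr => j _; rewrite !mxE mulrC.
have eC i : 0 <= toC (e i) <= 1 by rewrite ler0c lecR; exact: e01.
pose om j := \sum_i toC (e i) * (W j i * (W j i)^*).
have om_ge0 j : 0 <= om j.
  by apply: sumr_ge0 => i _; rewrite mulr_ge0 ?mul_conjC_ge0 //; case/andP: (eC i).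
have om_le1 j : om j <= 1.
  rewrite -(row_norm j); apply: ler_sum => i _.
  by case/andP: (eC i) => e0 e1; rewrite ler_piMl // mul_conjC_ge0.
have omE j : toC (complex.Re (om j)) = om j by apply: RRe_real; exact: ger0_real.
exists (fun j => complex.Re (om j)); split=> //.
- move=> j; rewrite -ler0c -lecR omE (rmorph1 (real_complex R)).
  exact/andP.
- apply: complexI; rewrite !rmorph_sum /=.
  under eq_bigr do rewrite omE.
  rewrite /om exchange_big /=; apply: eq_bigr => i _.
  by rewrite -mulr_sumr col_norm mulr1.
Qed.

(* In the eigenbasis of M, the diagonal entries of V^T M V are averages of
   the eigenvalues a_j with the weights |W_ji|^2, W = Q V. *)
Lemma eigen_weights (R : rcfType) (p k : nat) (M V : 'M[R]_p) :
  M^T = M -> V^T *m V = 1%:M -> (k <= p)%N ->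
  exists (a w : 'I_p -> R),
   [/\ char_poly M = \prod_j ('X - (a j)%:P),
       forall j, 0 <= w j <= 1,
       \sum_j w j = k%:R &
       \sum_(i < p) (i < k)%N%:R * (V^T *m M *m V) i i = \sum_j a j * w j].
Proof.
move=> MT VV kp.
have [Q [a [QQ EM Ech]]] := sym_spectral MT.
set W := Q *m MC V; set Wc := map_mx Num.conj W^T.
have WcE : Wc = (MC V)^T *m map_mx Num.conj Q^T.
  rewrite /Wc /W trmx_mul map_mxM; congr (_ *m _).
  by apply/matrixP => i j; rewrite !mxE; exact: conj_toC.
have WW : W *m Wc = 1%:M.
  have VVt : MC V *m (MC V)^T = 1%:M.
    by rewrite map_trmx -map_mxM mulmx1C ?map_mx1.
  by rewrite WcE /W -mulmxA (mulmxA (MC V)) VVt mul1mx.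
have EVMV : MC (V^T *m M *m V) = Wc *m diag_mx (\row_j toC (a j)) *m W.
  by rewrite !map_mxM -map_trmx EM WcE /W !mulmxA.
have diagE i : toC ((V^T *m M *m V) i i) = \sum_j (W j i)^* * toC (a j) * W j i.
  have := congr1 (fun A : 'M[R[i]]_p => A i i) EVMV; rewrite [in LHS]mxE => ->.
  rewrite mxE; apply: eq_bigr => j _.
  by rewrite mul_mx_diag !mxE.
have e01 i : 0 <= ((i < k)%N%:R : R) <= 1 by case: (i < k)%N; rewrite /= ?lexx ?ler01.
have [w [wE w01 sw]] := unitary_weights WW e01.
exists a, w; split=> //; first by rewrite sw sumr_indicator_ltn.
apply: complexI; rewrite !rmorph_sum /=.
under eq_bigr do rewrite rmorphM /= diagE mulr_sumr.
under [RHS]eq_bigr do rewrite rmorphM /= wE mulr_sumr.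
rewrite exchange_big /=; apply: eq_bigr => i _; apply: eq_bigr => j _.
ring.
Qed.

Section Designs.
Variables (R : rcfType) (X : finType) (p : nat) (f : X -> 'cV[R]_p).
Implicit Types (mu xi : design R X).

Lemma trmx_Minf xi : (Minf f xi)^T = Minf f xi.
Proof.
rewrite /Minf raddf_sum /=; apply: eq_bigr => x _.
by rewrite linearZ /= trmx_mul trmxK.
Qed.

Lemma sum_quadform_Minf xi (A : 'M[R]_p) :
  \sum_x ((f x)^T *m A *m f x) 0 0 * xi x = \tr (A *m Minf f xi).
Proof.
rewrite /Minf mulmx_sumr raddf_sum /=; apply: eq_bigr => x _.
rewrite -scalemxAr linearZ /= mulrC; congr (_ * _).
by rewrite mulmxA mxtrace_mulC mulmxA /mxtrace big_ord1.
Qed.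

Lemma sum_sqnorm_Minf xi (Y : 'M[R]_p) :
  \sum_x sqnorm (Y *m f x) * xi x = \tr (Y^T *m Y *m Minf f xi).
Proof.
rewrite -sum_quadform_Minf; apply: eq_bigr => x _.
by rewrite sqnormE trmx_mul !mulmxA.
Qed.

Lemma psdmx_Minf xi : (forall x, 0 <= xi x) -> psdmx (Minf f xi).
Proof.
move=> xi_ge0 v; set w := (map_mx Num.conj v)^T.
pose z x := (v *m MC (f x)) 0 0.
have MCE : MC (Minf f xi) = \sum_x toC (xi x) *: (MC (f x) *m (MC (f x))^T).
  rewrite /Minf map_mx_sum; apply: eq_bigr => x _.
  by rewrite map_mxZ map_mxM map_trmx.
have zE x : ((MC (f x))^T *m w) 0 0 = (z x)^*.
  rewrite /z !mxE rmorph_sum; apply: eq_bigr => i _.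
  by rewrite !mxE rmorphM /= conj_toC mulrC.
have formE : (v *m MC (Minf f xi) *m w) 0 0 = \sum_x toC (xi x) * (z x * (z x)^*).
  rewrite MCE mulmx_sumr mulmx_suml summxE; apply: eq_bigr => x _.
  rewrite -scalemxAr -scalemxAl mxE; congr (_ * _).
  by rewrite !mulmxA -(mulmxA (v *m _)) -/(z x) mxE big_ord1 zE.
have term_ge0 x : 0 <= toC (xi x) * (z x * (z x)^*).
  by rewrite mulr_ge0 ?mul_conjC_ge0 // ler0c.
rewrite formE; split; first exact: sumr_ge0.
move=> /psumr_eq0P form0; rewrite MCE mulmx_sumr; apply: big1 => x _.
have /eqP := form0 (fun y _ => term_ge0 y) x isT.
rewrite mulf_eq0 mul_conjC_eq0 -scalemxAr => /orP[/eqP-> | /eqP zx0].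
  by rewrite scale0r.
suff vf0 : v *m MC (f x) = 0 by rewrite mulmxA vf0 mul0mx scaler0.
by apply/matrixP => i j; rewrite !ord1 [RHS]mxE.
Qed.

Lemma phi_D_le_H_D mu xi : (0 < p)%N -> in_Xiplus f mu -> in_Xiplus f xi ->
  phi_D f xi <= \sum_x H_D f mu x * xi x.
Proof.
move=> p0 [[mu_ge0 _] uN] [[xi_ge0 _] _].
set N := Minf f mu; set P := Minf f xi.
have psdN := psdmx_Minf mu_ge0; have psdP := psdmx_Minf xi_ge0.
have -> : \sum_x H_D f mu x * xi x = proot p (\det N) / p%:R * \tr (invmx N *m P).
  rewrite -sum_quadform_Minf mulr_sumr; apply: eq_bigr => x _.
  by rewrite /H_D mulrA.
rewrite /phi_D -/P mxtrace_mulC.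
have [dPN_ge0 tPN_ge0 dPN_le] := det_le_AGM_trace p0 psdP psdN uN.
have [dN_ge0 _ _] := det_le_AGM_trace p0 psdN (@psdmx1 R p) (unitmx1 _ _).
rewrite invmx1 mulmx1 in dN_ge0.
have dN_gt0 : 0 < \det N by rewrite lt_def dN_ge0 andbT -unitfE -unitmxE.
have detP : \det P = \det (P *m invmx N) * \det N.
  by rewrite det_mulmx det_inv mulfVK ?gt_eqF.
have dP_ge0 : 0 <= \det P by rewrite detP mulr_ge0.
have [rP_ge0 rPE] := proot_spec p0 dP_ge0.
have [rN_ge0 rNE] := proot_spec p0 dN_ge0.
have rhs_ge0 : 0 <= proot p (\det N) / p%:R * \tr (P *m invmx N).
  by rewrite mulr_ge0 // divr_ge0 // ler0n.
rewrite -(ler_pXn2r p0) ?nnegrE //.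
rewrite rPE -mulrA exprMn rNE detP [X in X <= _]mulrC ler_wpM2l // mulrC.
exact: dPN_le.
Qed.

(* Cauchy-Schwarz for the form (Y, Z) |-> tr (Y M(xi) Z^T), expanded at
   Y = M(mu)^-1 - s M(xi)^-1 with s = tr M(mu)^-1 / tr M(xi)^-1. *)
Lemma phi_A_le_H_A mu xi : (0 < p)%N -> in_Xiplus f mu -> in_Xiplus f xi ->
  phi_A f xi <= \sum_x H_A f mu x * xi x.
Proof.
move=> p0 [[mu_ge0 _] uN] [[xi_ge0 _] uP].
set N := Minf f mu; set P := Minf f xi; set Ni := invmx N; set Pi := invmx P.
have a_gt0 : 0 < \tr Ni := tr_invmx_gt0 p0 (psdmx_Minf mu_ge0) uN.
have c_gt0 : 0 < \tr Pi := tr_invmx_gt0 p0 (psdmx_Minf xi_ge0) uP.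
set a := \tr Ni in a_gt0 *; set c := \tr Pi in c_gt0 *.
set b := \tr (Ni *m P *m Ni^T).
have -> : \sum_x H_A f mu x * xi x = b / a ^+ 2.
  rewrite /b mxtrace_mulC mulmxA -sum_sqnorm_Minf mulr_suml.
  by apply: eq_bigr => x _; rewrite /H_A mulrAC.
have NiT : Ni^T = Ni by rewrite /Ni trmx_inv trmx_Minf.
have PiT : Pi^T = Pi by rewrite /Pi trmx_inv trmx_Minf.
have form_ge0 : 0 <= \tr ((Ni - (a / c) *: Pi) *m P *m (Ni - (a / c) *: Pi)^T).
  rewrite mxtrace_mulC mulmxA -sum_sqnorm_Minf.
  by apply: sumr_ge0 => x _; rewrite mulr_ge0 ?sqnorm_ge0.
rewrite mxtrace_form_subZ -/b PiT NiT -mulmxA mulmxV // mulmx1 mulVmx // !mul1mx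
  -/a -/c in form_ge0.
have ab : a ^+ 2 / c <= b.
  rewrite -subr_ge0; apply: le_trans form_ge0 _; rewrite le_eqVlt; apply/orP; left.
  by apply/eqP; field; rewrite gt_eqF.
rewrite /phi_A -/P -/Pi -/c.
have -> : 1 / c = (a ^+ 2 / c) / a ^+ 2 by field; rewrite ?expf_neq0 ?gt_eqF.
by rewrite ler_wpM2r // invr_ge0 exprn_ge0 // ltW.
Qed.

Lemma PkE (k : nat) (V : 'M[R]_p) :
  Pk k V = V *m diag_mx (\row_(i < p) ((i < k)%N%:R : R)) *m V^T.
Proof.
apply/matrixP => a b; rewrite /Pk summxE mxE big_mkcond /=.
apply: eq_bigr => i _; rewrite mul_mx_diag !mxE big_ord1 !mxE.
by case: (i < k)%N; rewrite ?mulr1 ?mulr0 ?mul0r.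
Qed.

Lemma sum_H_E_diag (k : nat) (V : design R X -> 'M[R]_p) mu xi :
  (V mu)^T *m V mu = 1%:M ->
  \sum_x H_E f k V mu x * xi x =
  \sum_(i < p) (i < k)%N%:R * ((V mu)^T *m Minf f xi *m V mu) i i.
Proof.
move=> VV; set U := V mu; set D := diag_mx (\row_(i < p) ((i < k)%N%:R : R)).
have DD : D *m D = D.
  apply/matrixP => i j; rewrite mul_diag_mx !mxE.
  by case: eqP => _; case: (i < k)%N; rewrite /= ?mulr1 ?mulr0 ?mul1r.
have PP : (U *m D *m U^T)^T *m (U *m D *m U^T) = U *m D *m U^T.
  rewrite !trmx_mul trmxK tr_diag_mx -/D !mulmxA.
  by rewrite -(mulmxA _ U^T U) VV mulmx1 -(mulmxA _ D D) DD.
rewrite /H_E -/U sum_sqnorm_Minf PkE -/D PP.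
rewrite mxtrace_mulC !mulmxA mxtrace_mulC !mulmxA mxtrace_mulC mul_diag_mx /mxtrace.
by apply: eq_bigr => i _; rewrite !mxE.
Qed.

Lemma eigvals_spec (M : 'M[R]_p) (a : 'I_p -> R) :
  char_poly M = \prod_j ('X - (a j)%:P) ->
  sorted <=%R (eigvals M) /\ perm_eq [seq a j | j <- enum 'I_p] (eigvals M).
Proof.
move=> E.
have Em : char_poly M = \prod_(x <- [seq a j | j <- enum 'I_p]) ('X - x%:P).
  by rewrite E big_map big_enum.
have [sorted_eig Eeig] : sorted <=%R (eigvals M) /\
    char_poly M = \prod_(x <- eigvals M) ('X - x%:P).
  rewrite /eigvals; apply epsilon_spec.
  exists (sort <=%R [seq a j | j <- enum 'I_p]); split.
    by apply: sort_sorted; exact: le_total.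
  by rewrite Em; apply/esym/perm_big; rewrite perm_sort.
by split=> //; apply: prod_XsubC_eq; rewrite -Em.
Qed.

Lemma phi_E_le_H_E (k : nat) (V : design R X -> 'M[R]_p) mu xi :
  (0 < k)%N -> (k <= p)%N -> ordered_eigenbasis (Minf f mu) (V mu) ->
  phi_E f k xi <= \sum_x H_E f k V mu x * xi x.
Proof.
move=> k0 kp [VV _]; rewrite sum_H_E_diag //.
have [a [w [Ech w01 sw ->]]] := eigen_weights (trmx_Minf xi) VV kp.
have [eig_sorted eig_perm] := eigvals_spec Ech.
exact: sum_smallest_le_weighted eig_sorted eig_perm k0 kp w01 sw.
Qed.

End Designs.

Lemma le_lp_optimal (R : rcfType) (X : finType) (Xs : seq (design R X))
    (H : design R X -> X -> R) (S : design R X -> Prop) (phi : design R X -> R)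
    (xi' : design R X) (t' : R) :
  (forall xi, S xi -> in_Xi xi) ->
  (forall mu xi, mu \in Xs -> S xi -> phi xi <= \sum_x H mu x * xi x) ->
  lp_optimal Xs H xi' t' -> forall xi, S xi -> phi xi <= t'.
Proof.
move=> S_Xi phi_le [_ opt] xi Sxi; apply: (opt xi (phi xi)).
by split=> [|mu muXs]; [exact: S_Xi | exact: phi_le].
Qed.

Theorem mainTheorem4 (R : rcfType) (X : finType) (p : nat) (f : X -> 'cV[R]_p) :
  (0 < p)%N ->
  [/\
   (* (H_D, Xi^+), phi_D *)
   forall (Xs : seq (design R X)) (xi' : design R X) (t' : R),
     Xs != [::] -> (forall mu, mu \in Xs -> in_Xiplus f mu) ->
     lp_optimal Xs (H_D f) xi' t' -> in_Xiplus f xi' ->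
     phi_D f xi' <= t' /\ (forall xi, in_Xiplus f xi -> phi_D f xi <= t'),
   (* (H_A, Xi^+), phi_A *)
   forall (Xs : seq (design R X)) (xi' : design R X) (t' : R),
     Xs != [::] -> (forall mu, mu \in Xs -> in_Xiplus f mu) ->
     lp_optimal Xs (H_A f) xi' t' -> in_Xiplus f xi' ->
     phi_A f xi' <= t' /\ (forall xi, in_Xiplus f xi -> phi_A f xi <= t')
   &
   (* (H_{E_k}, Xi), phi_{E_k} *)
   forall (k : nat) (V : design R X -> 'M[R]_p)
          (Xs : seq (design R X)) (xi' : design R X) (t' : R),
     (0 < k)%N -> (k <= p)%N ->
     Xs != [::] -> (forall mu, mu \in Xs -> in_Xi mu) ->
     (forall mu, mu \in Xs -> ordered_eigenbasis (Minf f mu) (V mu)) ->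
     lp_optimal Xs (H_E f k V) xi' t' -> in_Xi xi' ->
     phi_E f k xi' <= t' /\ (forall xi, in_Xi xi -> phi_E f k xi <= t')].
Proof.
have Xiplus_Xi xi : in_Xiplus f xi -> in_Xi xi by case.
move=> p0; split.
- move=> Xs xi' t' _ Xs_plus opt xi'_plus.
  have le_t' := le_lp_optimal Xiplus_Xi
    (fun mu xi muXs => phi_D_le_H_D p0 (Xs_plus mu muXs)) opt.
  by split=> //; exact: le_t'.
- move=> Xs xi' t' _ Xs_plus opt xi'_plus.
  have le_t' := le_lp_optimal Xiplus_Xi
    (fun mu xi muXs => phi_A_le_H_A p0 (Xs_plus mu muXs)) opt.
  by split=> //; exact: le_t'.
- move=> k V Xs xi' t' k0 kp _ _ eigV opt xi'_Xi.
  have le_t' := le_lp_optimal (fun _ => id)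
    (fun mu xi muXs _ => phi_E_le_H_E xi k0 kp (eigV mu muXs)) opt.
  by split=> //; exact: le_t'.
Qed.
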